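(* Let $r,\tilde r:\mathcal S\times\mathcal A\times\mathcal B\to[0,1]$, let $\pi$ be a leader policy with $\pi(\cdot\mid s,b)\in\Delta(\mathcal A)$, and set $r^\pi(s,b)=\sum_a\pi(a\mid s,b)r(s,a,b)$, $\tilde r^\pi(s,b)=\sum_a\pi(a\mid s,b)\tilde r(s,a,b)$, $\nu(b\mid s)\propto\exp(\eta r^\pi(s,b))$ and $\tilde\nu(b\mid s)\propto\exp(\eta\tilde r^\pi(s,b))$. Then for every $s\in\mathcal S$, $$D_{\rm TV}\bigl(\nu(\cdot\mid s),\tilde\nu(\cdot\mid s)\bigr)\le\eta\,\mathbb E_s\Bigl[\bigl|(\tilde r^\pi-r^\pi)(s,b)-\mathbb E_s[(\tilde r^\pi-r^\pi)(s,b)]\bigr|\Bigr]+C^{(3)}\,\mathbb E_s\Bigl[\bigl((\tilde r^\pi-r^\pi)(s,b)-\mathbb E_s[(\tilde r^\pi-r^\pi)(s,b)]\bigr)^2\Bigr],$$ where $\mathbb E_s$ is the expectation over $b\sim\nu(\cdot\mid s)$, $C^{(3)}=\frac{\eta^2e^{2\eta B_A}}{2}\bigl(2+\eta B_Ae^{2\eta B_A}\bigr)$ and $B_A=2+2\eta^{-1}\log|\mathcal B|$.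
   Context: $\mathcal S$ state space, $\mathcal A,\mathcal B$ action sets ($\mathcal B$ finite), $\eta>0$. $D_{\rm TV}(p,q)=\frac12\|p-q\|_1$. *)

From HB Require Import structures.
From mathcomp Require Import all_boot all_order all_algebra.
From mathcomp Require Import all_classical all_reals all_analysis.
Set Implicit Arguments. Unset Strict Implicit. Unset Printing Implicit Defensive.
Import Order.TTheory GRing.Theory Num.Theory.
Local Open Scope ring_scope.

Section Defs.
Variables (R : realType) (S : Type) (A B : finType).

Definition rpi (pi : S -> B -> A -> R) (r : S -> A -> B -> R) (s : S) (b : B) : R :=
  \sum_(a : A) pi s b a * r s a b.

Definition gibbs (eta : R) (f : B -> R) (b : B) : R :=
  expR (eta * f b) / \sum_(b' : B) expR (eta * f b').

Definition dTV (p q : B -> R) : R := 2^-1 * \sum_(b : B) `|p b - q b|.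

Definition expect (p : B -> R) (g : B -> R) : R := \sum_(b : B) p b * g b.
End Defs.

Definition BA (R : realType) (eta : R) (nB : nat) : R := 2 + 2 * eta^-1 * ln nB%:R.

Definition C3 (R : realType) (eta bA : R) : R :=
  eta ^+ 2 * expR (2 * eta * bA) / 2 * (2 + eta * bA * expR (2 * eta * bA)).

From HB Require Import structures.
From mathcomp Require Import all_boot all_order all_algebra.
From mathcomp Require Import all_classical all_reals all_analysis.
From mathcomp Require Import ring lra.
Import Order.TTheory GRing.Theory Num.Theory.
Local Open Scope ring_scope.

(* Both Gibbs laws are built from the same reference law nu, and nut is the
   exponential tilt of nu by x = eta (d - E_nu d), a centred exponent.  For a
   tilt by a centred x the normaliser is Z = 1 + E_nu[e^x - 1 - x] >= 1, so
   |nu - nut| <= nu (|x| + (e^x - 1 - x) + (Z - 1)) pointwise; summing gives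
   2 D_TV <= E|x| + 2 E[e^x - 1 - x], and e^x - 1 - x <= x^2 e^|x| with
   |x| <= 2 eta yields the first- and second-order terms. *)

Lemma expR_le1DxexpR {R : realType} (x : R) : expR x <= 1 + x * expR x.
Proof.
have hN : 1 - x <= (expR x)^-1 by rewrite -expRN; exact: expR_ge1Dx.
have hx := expR_gt0 x.
have : (1 - x) * expR x <= (expR x)^-1 * expR x by rewrite ler_pM2r.
rewrite mulVf ?gt_eqF //; nra.
Qed.

Lemma expR_sub1Dx_le {R : realType} (x : R) :
  expR x - 1 - x <= x ^+ 2 * expR `|x|.
Proof.
have hup := expR_le1DxexpR x; have hlo := expR_ge1Dx x; have hx := expR_gt0 x.
case: (lerP 0 x) => x0.
  rewrite ger0_norm //.
  have : x * (expR x - 1) <= x * (x * expR x) by rewrite ler_wpM2l //; lra.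
  nra.
rewrite ltr0_norm //.
have : - x * (1 - expR x) <= - x * - x by rewrite ler_wpM2l //; lra.
have : x ^+ 2 * 1 <= x ^+ 2 * expR (- x).
  by rewrite ler_wpM2l ?sqr_ge0 // -expR0 ler_expR; lra.
rewrite expr2 mulr1; nra.
Qed.

Section Tilting.
Context {R : realType} {B : finType}.
Implicit Types (p f g x : B -> R) (eta : R).

Lemma sumr_gt0 (F : B -> R) :
  (0 < #|B|)%N -> (forall b, 0 < F b) -> 0 < \sum_b F b.
Proof.
move=> /card_gt0P [b0 _] F_gt0; rewrite (bigD1 b0) //=.
have : 0 <= \sum_(b | b != b0) F b by apply: sumr_ge0 => b _; exact: ltW.
by have := F_gt0 b0; lra.
Qed.

Lemma gibbs_ge0 eta f b : 0 <= gibbs eta f b.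
Proof. by rewrite divr_ge0 ?expR_ge0 ?sumr_ge0 // => b' _; exact: expR_ge0. Qed.

Lemma gibbs_sum1 eta f : (0 < #|B|)%N -> \sum_b gibbs eta f b = 1.
Proof.
move=> B_gt0; rewrite -big_distrl /= divff // gt_eqF //.
by apply: sumr_gt0 => // b; exact: expR_gt0.
Qed.

Definition tilt p x b : R := p b * expR (x b) / \sum_b' p b' * expR (x b').

Lemma gibbs_tilt eta f g c b : (0 < #|B|)%N ->
  gibbs eta g b = tilt (gibbs eta f) (fun b => eta * (g b - f b - c)) b.
Proof.
move=> B_gt0.
have eg i : expR (eta * g i) =
    expR (eta * c) * (expR (eta * f i) * expR (eta * (g i - f i - c))).
  by rewrite -!expRD; congr expR; ring.
have Zf_gt0 : 0 < \sum_b' expR (eta * f b') by apply: sumr_gt0 => // i; exact: expR_gt0.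
have Zt_gt0 : 0 < \sum_b' expR (eta * f b') * expR (eta * (g b' - f b' - c)).
  by apply: sumr_gt0 => // i; rewrite mulr_gt0 ?expR_gt0.
rewrite /tilt /gibbs eg.
under [X in _ = _ / X]eq_bigr do rewrite mulrAC.
under [X in _ / X = _]eq_bigr do rewrite eg.
rewrite -big_distrr -big_distrl /=; field.
by rewrite !gt_eqF ?expR_gt0.
Qed.

Section CentredTilt.
Context {p x : B -> R}.
Hypotheses (p_ge0 : forall b, 0 <= p b) (p_sum1 : \sum_b p b = 1)
  (x_centred : expect p x = 0).

Let Z := \sum_b p b * expR (x b).

Let normaliser_eq : Z = 1 + expect p (fun b => expR (x b) - 1 - x b).
Proof.
have x0 : \sum_b p b * x b = 0 := x_centred.
rewrite /expect; under eq_bigr do rewrite !mulrBr mulr1.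
by rewrite !sumrB p_sum1 x0 subr0 addrC subrK.
Qed.

Let convexity_gap_ge0 b : 0 <= expR (x b) - 1 - x b.
Proof. by have := expR_ge1Dx (x b); lra. Qed.

Lemma dTV_tilt : dTV p (tilt p x) <=
  2^-1 * expect p (fun b => `|x b|) + expect p (fun b => expR (x b) - 1 - x b).
Proof.
have Z_ge1 : 1 <= Z.
  have : 0 <= expect p (fun b => expR (x b) - 1 - x b).
    by apply: sumr_ge0 => b _; rewrite mulr_ge0.
  by rewrite normaliser_eq; lra.
have Z_gt0 : 0 < Z by lra.
have pointwise b : `|p b - tilt p x b| <=
    p b * `|x b| + p b * (expR (x b) - 1 - x b) + p b * (Z - 1).
  have -> : p b - tilt p x b = p b * (Z - expR (x b)) / Z.
    by rewrite /tilt -/Z; field; rewrite gt_eqF.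
  rewrite !normrM normfV (ger0_norm (p_ge0 b)) (gtr0_norm Z_gt0).
  apply: (@le_trans _ _ (p b * `|Z - expR (x b)|)).
    rewrite -mulrA ler_wpM2l //; apply: ler_piMr => //.
    by rewrite invr_le1 // unitfE gt_eqF.
  rewrite -!mulrDr ler_wpM2l // ler_norml.
  have := convexity_gap_ge0 b; have := ler_norm (x b); have := ler_norm (- x b).
  rewrite normrN; lra.
rewrite /dTV; apply: le_trans (ler_wpM2l _ (ler_sum _ (fun b _ => pointwise b))) _.
  by rewrite invr_ge0.
rewrite !big_split /= -big_distrl /= p_sum1 mul1r normaliser_eq /expect; lra.
Qed.

End CentredTilt.

Lemma norm_sub_expect_le {p h : B -> R} {M : R} :
  (forall b, 0 <= p b) -> \sum_b p b = 1 -> (forall b, `|h b| <= M) ->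
  forall b, `|h b - expect p h| <= 2 * M.
Proof.
move=> p_ge0 p_sum1 h_le b.
have : `|expect p h| <= M.
  apply: le_trans (ler_norm_sum _ _ _) _.
  rewrite -[leRHS]mul1r -p_sum1 big_distrl /=; apply: ler_sum => b' _.
  by rewrite normrM ger0_norm // ler_wpM2l.
by have := ler_normB (h b) (expect p h); have := h_le b; lra.
Qed.

Lemma dTV_gibbs {eta : R} {f g : B -> R} {M : R} : 0 < eta -> (0 < #|B|)%N ->
  let nu := gibbs eta f in
  let d := fun b => g b - f b in
  (forall b, `|d b - expect nu d| <= M) ->
  dTV nu (gibbs eta g) <=
    eta / 2 * expect nu (fun b => `|d b - expect nu d|)
    + eta ^+ 2 * expR (eta * M) * expect nu (fun b => (d b - expect nu d) ^+ 2).
Proof.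
move=> eta_gt0 B_gt0 nu d d_le.
set c := expect nu d.
set x := fun b => eta * (d b - c).
have nu_ge0 b : 0 <= nu b by exact: gibbs_ge0.
have nu_sum1 : \sum_b nu b = 1 by exact: gibbs_sum1.
have x_centred : expect nu x = 0.
  rewrite /expect /x; under eq_bigr do rewrite mulrCA mulrBr.
  by rewrite -big_distrr sumrB -big_distrl /= nu_sum1 mul1r subrr mulr0.
have -> : gibbs eta g = tilt nu x.
  by apply/funext => b; rewrite (gibbs_tilt eta f g c).
apply: le_trans (dTV_tilt nu_ge0 nu_sum1 x_centred) _.
apply: lerD.
  have -> : expect nu (fun b => `|x b|) = eta * expect nu (fun b => `|d b - c|).
    rewrite /expect big_distrr /=; apply: eq_bigr => b _.
    by rewrite /x normrM gtr0_norm // mulrCA.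
  by rewrite mulrA (mulrC 2^-1).
rewrite /expect big_distrr /=; apply: ler_sum => b _.
rewrite mulrCA ler_wpM2l //; apply: le_trans (expR_sub1Dx_le _) _.
rewrite /x exprMn mulrAC ler_wpM2r ?sqr_ge0 // ler_wpM2l ?sqr_ge0 //.
by rewrite ler_expR normrM gtr0_norm // ler_wpM2l // ltW.
Qed.

End Tilting.

Lemma convex_comb_in01 {R : realType} {A : finType} {w v : A -> R} :
  (forall a, 0 <= v a <= 1) -> (forall a, 0 <= w a) -> \sum_a w a = 1 ->
  0 <= \sum_a w a * v a <= 1.
Proof.
move=> v01 w_ge0 w_sum1; apply/andP; split.
  by apply: sumr_ge0 => a _; rewrite mulr_ge0 //; case/andP: (v01 a).
rewrite -w_sum1; apply: ler_sum => a _.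
by rewrite ler_piMr //; case/andP: (v01 a).
Qed.

Lemma BA_ge2 {R : realType} (eta : R) (n : nat) : 0 < eta -> (0 < n)%N ->
  2 <= BA eta n.
Proof.
move=> eta_gt0 n_gt0.
have : 0 <= 2 * eta^-1 * ln (n%:R : R).
  apply: mulr_ge0; first by rewrite mulr_ge0 // invr_ge0 ltW.
  by apply: ln_ge0; rewrite ler1n.
by rewrite /BA; lra.
Qed.

Lemma C3_ge {R : realType} (eta bA : R) : 0 < eta -> 1 <= bA ->
  eta ^+ 2 * expR (2 * eta) <= C3 eta bA.
Proof.
move=> eta_gt0 bA_ge1.
set E := expR (2 * eta * bA).
have E_gt0 : 0 < E := expR_gt0 _.
have -> : C3 eta bA = eta ^+ 2 * E + eta ^+ 2 * E / 2 * (eta * bA * E).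
  by rewrite /C3 -/E; field.
have : 0 <= eta ^+ 2 * E / 2 * (eta * bA * E).
  by rewrite !mulr_ge0 ?sqr_ge0 ?invr_ge0 ?ltW //; lra.
have : eta ^+ 2 * expR (2 * eta) <= eta ^+ 2 * E.
  by rewrite ler_wpM2l ?sqr_ge0 // ler_expR ler_peMr // mulr_ge0 // ltW.
lra.
Qed.

Theorem mainTheorem5 (R : realType) (S : Type) (A B : finType) (eta : R)
  (r rt : S -> A -> B -> R) (pi : S -> B -> A -> R)
  (heta : 0 < eta) (hB : (0 < #|B|)%N)
  (hr : forall s a b, 0 <= r s a b <= 1)
  (hrt : forall s a b, 0 <= rt s a b <= 1)
  (hpi0 : forall s b a, 0 <= pi s b a)
  (hpi1 : forall s b, \sum_(a : A) pi s b a = 1)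
  (s : S) :
  let nu := gibbs eta (rpi pi r s) in
  let nut := gibbs eta (rpi pi rt s) in
  let d := fun b : B => rpi pi rt s b - rpi pi r s b in
  dTV nu nut <=
    eta * expect nu (fun b => `|d b - expect nu d|)
    + C3 eta (BA eta #|B|) * expect nu (fun b => (d b - expect nu d) ^+ 2).
Proof.
cbv zeta.
set nu := gibbs eta (rpi pi r s).
set d := fun b => rpi pi rt s b - rpi pi r s b.
have d_le1 b : `|d b| <= 1.
  have := convex_comb_in01 (fun a => hr s a b) (hpi0 s b) (hpi1 s b).
  have := convex_comb_in01 (fun a => hrt s a b) (hpi0 s b) (hpi1 s b).
  by rewrite /d /rpi ler_norml => /andP[? ?] /andP[? ?]; apply/andP; split; lra.
have d_dev := norm_sub_expect_le (gibbs_ge0 eta _) (gibbs_sum1 eta (rpi pi r s) hB) d_le1.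
have E1_ge0 : 0 <= expect nu (fun b => `|d b - expect nu d|).
  by apply: sumr_ge0 => b _; rewrite mulr_ge0 ?gibbs_ge0.
have E2_ge0 : 0 <= expect nu (fun b => (d b - expect nu d) ^+ 2).
  by apply: sumr_ge0 => b _; rewrite mulr_ge0 ?gibbs_ge0 ?sqr_ge0.
apply: le_trans (dTV_gibbs heta hB d_dev) _; apply: lerD.
  by apply: (ler_wpM2r E1_ge0); lra.
apply: (ler_wpM2r E2_ge0); rewrite mulr1 (mulrC eta) C3_ge //.
by have := BA_ge2 eta #|B| heta hB; lra.
Qed.
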